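(* Let $G=([n],E)$ be a persistent graph and let $S\in\Xi(G)$ be a 3-simplex containing vertices $a<b<c$ such that $\{a,b,c\}\notin F_2(C)$, where $C=C(n+2,3)$. Then there exists another 3-simplex $S'\in\Xi(G)$, $S'\neq S$, with $\{a,b,c\}\subset S'$.
   Context: The cyclic polytope $C=C(n+2,3)$ has vertices $0,1,\dots,n+1$ (ordered along the moment curve $t\mapsto(t,t^2,t^3)$), and its 2-faces (as vertex sets) are $F_2(C)=\{\{0,i,i+1\},\{i-1,i,n+1\}: 0<i<n+1\}$. A graph $G=([n],E)$ is persistent if (1) $\{i,i+1\}\in E$ for all $1\le i<n$; (2) (X-property) if $\{a,c\},\{b,d\}\in E$ for $a<b<c<d$ then $\{a,d\}\in E$; (3) (bar-property) for every edge $\{a,b\}\in E$ with $a<b-1$ there is $x$ with $a<x<b$ and $\{a,x\},\{x,b\}\in E$. $\hat G$ is the graph on $\{0,\dots,n+1\}$ with edge set $E$ together with all pairs containing $0$ or $n+1$. For an edge $e=\{v,w\}\in E$ with $v<w$, $\ell_G(e)=\max\{i : i<v,\ \{i,w\}\in E(\hat G)\}$, $r_G(e)=\min\{i : w<i,\ \{i,v\}\in E(\hat G)\}$, $\xi_G(e)=\{\ell_G(e),v,w,r_G(e)\}$, and $\Xi(G)=\{\xi_G(e): e\in E\}$. *)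

From HB Require Import structures.
From mathcomp Require Import all_boot.
From mathcomp Require Import finmap.
Set Implicit Arguments. Unset Strict Implicit. Unset Printing Implicit Defensive.
Local Open Scope fset_scope.

(* A graph G = ([n], E) is given by a relation E on nat where E a b (for a < b)
   means that {a, b} is an edge; edges are required to lie in [n] = {1..n}. *)
Definition graph_on (n : nat) (E : rel nat) : Prop :=
  forall a b, E a b -> [/\ 1 <= a, a < b & b <= n].

Definition adj (E : rel nat) (x y : nat) : bool := E x y || E y x.

Definition persistent (n : nat) (E : rel nat) : Prop :=
  [/\ (forall i, 1 <= i -> i < n -> adj E i i.+1),
      (forall a b c d, a < b -> b < c -> c < d ->
          adj E a c -> adj E b d -> adj E a d)
    & (forall a b, a < b -> adj E a b -> a < b.-1 ->
          exists2 x, a < x < b & adj E a x && adj E x b)].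

Definition hadj (n : nat) (E : rel nat) (x y : nat) : bool :=
  adj E x y ||
  [&& x != y, x <= n.+1, y <= n.+1 &
      [|| x == 0, y == 0, x == n.+1 | y == n.+1]].

Definition ellG (n : nat) (E : rel nat) (v w : nat) : nat :=
  \max_(0 <= i < v | hadj n E i w) i.

(* r_G(e) = min { i : w < i, {i,v} in E(\hat G) } (all such i are <= n+1) *)
Definition rG (n : nat) (E : rel nat) (v w : nat) : nat :=
  \big[minn/n.+1]_(w.+1 <= i < n.+2 | hadj n E i v) i.

Definition xiG (n : nat) (E : rel nat) (v w : nat) : {fset nat} :=
  [fset ellG n E v w; v; w; rG n E v w].

Definition inXi (n : nat) (E : rel nat) (S : {fset nat}) : Prop :=
  exists v w, [/\ v < w, adj E v w & S = xiG n E v w].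

Definition inF2 (n : nat) (T : {fset nat}) : Prop :=
  exists i, [/\ 0 < i, i < n.+1 &
    T = [fset 0; i; i.+1] \/ T = [fset i.-1; i; n.+1]].

From HB Require Import structures.
From mathcomp Require Import all_boot zify.
From mathcomp Require Import finmap.
Local Open Scope fset_scope.
Set Implicit Arguments.
Unset Strict Implicit.

(* Work in the graph \hat G on {0, ..., N}, N = n + 1: it again has the X- and
   the bar-property, and since 0 and N are adjacent to everything, the simplex
   xi(e) of an edge e = {v, w} of G is a 4-set l < v < w < r. The reflection
   i |-> N - i maps \hat G to a graph of the same kind and xi-simplices to
   xi-simplices, reversing their order, so of the four triples of S only
   {v, w, r} and {l, v, r} need an argument. For {v, w, r}: if some x in (v, w)
   is adjacent to both w and r, the least one gives S' = xi({x, w}) =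
   {v, x, w, r}; otherwise r < N, because {v, w, r} is not a face, so {w, r} is
   an edge of G and S' = xi({w, r}) = {v, w, r, r'}. The triple {l, v, r} is
   handled alike with the edges {x, v} and {v, r}. In every verification a
   bar-triangle over a putative edge either shrinks the configuration or is
   ruled out by the X-property and the extremality of l and r. *)

Lemma bigmax_id_eq (P : pred nat) (s : seq nat) (m : nat) :
  m \in s -> P m -> (forall i, i \in s -> P i -> i <= m) ->
  \max_(i <- s | P i) i = m.
Proof.
move=> ms Pm le_m; apply/eqP; rewrite eqn_leq (leq_bigmax_seq m) // andbT.
exact/bigmax_leqP_seq.
Qed.

Lemma bigminn_id_eq (P : pred nat) (d : nat) (s : seq nat) (m : nat) :
  m \in s -> P m -> m <= d -> (forall i, i \in s -> P i -> m <= i) ->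
  \big[minn/d]_(i <- s | P i) i = m.
Proof.
move=> ms Pm md ge_m; apply/eqP; rewrite eqn_leq; apply/andP; split.
  elim: s ms {ge_m} => // x s IH; rewrite inE big_cons => /predU1P[<-|ms].
    by rewrite Pm geq_minl.
  by case: ifP => _; rewrite ?geq_min IH ?orbT.
rewrite big_seq_cond; elim/big_ind: _ => // [x y|i /andP[]]; last exact: ge_m.
by rewrite leq_min => ->.
Qed.

Lemma least_in_interval (P : pred nat) (p q : nat) :
  (exists2 m, p < m < q & P m /\ forall x, p < x < m -> ~~ P x) \/
  (forall x, p < x < q -> ~~ P x).
Proof.
case: (boolP (has P (index_iota p.+1 q))) => [/hasP[x] | /hasPn noP]; last first.
  by right=> x pxq; apply: noP; rewrite mem_index_iota.
rewrite mem_index_iota => pxq Px; left.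
have: exists x, (p < x < q) && P x by exists x; rewrite pxq.
case/ex_minnP=> m /andP[pmq Pm] min_m; exists m => //; split=> // y /andP[py ym].
apply/negP=> Py; have := min_m y; rewrite Py andbT; lia.
Qed.

Lemma card_fset4 (l v w r : nat) :
  l < v -> v < w -> w < r -> #|` [fset l; v; w; r]| = 4.
Proof. by move=> *; rewrite 2!(fsetUC _ [fset _]) 2!cardfsU1 cardfs2 !inE; lia. Qed.

Lemma fset3_sub_neq (K : choiceType) (a b c x : K) (A B : {fset K}) :
  a \in A -> b \in A -> c \in A -> x \in A -> x \notin B ->
  ([fset a; b; c] `<=` A) && (A != B).
Proof.
move=> aA bA cA xA xB; apply/andP; split; last by apply: contraNneq xB => <-.
by apply/fsubsetP=> y; rewrite !inE -!orbA => /or3P[] /eqP->.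
Qed.

Record persistent_hat (h : rel nat) (N : nat) : Prop := PersistentHat {
  hat_sym : symmetric h;
  hat_X : forall a b c d, a < b -> b < c -> c < d -> h a c -> h b d -> h a d;
  hat_bar : forall a b, a.+1 < b -> h a b ->
    exists2 x, a < x < b & h a x && h x b;
  hat_path : forall i, i < N -> h i i.+1;
  hat_adj0 : forall j, 0 < j -> j <= N -> h 0 j;
  hat_adjN : forall i, i < N -> h i N }.

Lemma hat_pred_adj h N q :
  persistent_hat h N -> 0 < q < N -> h q.-1 q && h q.-1 N.
Proof.
move=> hP /andP[q0 qN].
by rewrite -{2}(prednK q0) (hat_path hP) ?(hat_adjN hP) //; lia.
Qed.

(* {l, v, w, r} = xi({v, w}) computed in h; for h = \hat G the conditions
   0 < v and w < N say that {v, w} is an edge of G. *)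
Record xi_simplex (h : rel nat) (N l v w r : nat) : Prop := XiSimplex {
  xi_v_gt0 : 0 < v;
  xi_lt_lv : l < v;
  xi_lt_vw : v < w;
  xi_lt_wr : w < r;
  xi_w_ltN : w < N;
  xi_r_leN : r <= N;
  xi_edge : h v w;
  xi_adj_lw : h l w;
  xi_adj_rv : h r v;
  xi_max_l : forall i, l < i -> i < v -> ~~ h i w;
  xi_min_r : forall i, w < i -> i < r -> ~~ h i v }.

Section XiSimplexTheory.

Variables (h : rel nat) (N l v w r : nat).
Hypotheses (hP : persistent_hat h N) (S : xi_simplex h N l v w r).

Lemma xi_no_adj_across z i : l < z < v -> w < i < r -> ~~ h z i.
Proof.
have [_ lv vw wr _ _ hvw _ _ max_l min_r] := S.
have [k] := ubnP (i - z); elim: k z i => // k IH z i lt_k /andP[lz zv] /andP[wi ir].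
apply/negP=> hzi; have [|y /andP[zy yi] /andP[hzy hyi]] := hat_bar hP _ hzi; first lia.
case: (ltngtP y v) => [yv|vy|yv].
- by move: hyi; apply/negP; apply: IH; lia.
- case: (ltngtP y w) => [yw|wy|yw].
  + by move: (max_l z lz zv); rewrite (hat_X hP zv vy yw hzy hvw).
  + by move: hzy; apply/negP; apply: IH; lia.
  + by move: (max_l z lz zv); rewrite -yw hzy.
- by move: (min_r i wi ir); rewrite -yv (hat_sym hP) hyi.
Qed.

Lemma xi_adj_lv : h l v.
Proof.
have [_ lv vw _ _ _ hvw hlw _ max_l _] := S.
have: exists z, (v <= z) && h l z by exists w; rewrite ltnW.
case/ex_minnP=> z /andP[vz hlz] min_z.
have zw : z <= w by rewrite min_z // ltnW.
move: vz; rewrite leq_eqVlt => /predU1P[-> //|vz].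
have [|y /andP[ly yz] /andP[hly hyz]] := hat_bar hP _ hlz; first lia.
have yv : y < v.
  by rewrite ltnNge; apply/negP=> vy; have := min_z y; rewrite vy hly; lia.
have hyw : h y w.
  move: zw; rewrite leq_eqVlt => /predU1P[<- //|zw]; exact: (hat_X hP yv vz zw hyz hvw).
by move: (max_l y ly yv); rewrite hyw.
Qed.

Lemma xi_climb_to_w z : v <= z < w -> h z r ->
  exists2 z', z <= z' < w & [&& h z' r, h z' w & h w r].
Proof.
have [_ _ vw wr _ _ hvw _ _ _ min_r] := S.
have [k] := ubnP (w - z); elim: k z => // k IH z lt_k /andP[vz zw] hzr.
have [|y /andP[zy yr] /andP[hzy hyr]] := hat_bar hP _ hzr; first lia.
case: (ltngtP y w) => [yw|wy|yw].
- have [z' /andP[yz' z'w] hz'] := IH y ltac:(lia) ltac:(lia) hyr.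
  by exists z' => //; rewrite z'w andbT; lia.
- have hvy : h v y.
    move: vz; rewrite leq_eqVlt => /predU1P[-> //|vz].
    exact: (hat_X hP vz zw wy hvw hzy).
  by move: (min_r y wy yr); rewrite (hat_sym hP) hvy.
- by exists z; rewrite ?leqnn ?zw ?hzr -?yw ?hzy ?hyr.
Qed.

Lemma xi_climb_to_v z : l < z < v -> h z r ->
  exists2 z', z <= z' < v & h z' r && h z' v.
Proof.
have [_ _ vw wr _ _ hvw _ _ max_l _] := S.
have [k] := ubnP (v - z); elim: k z => // k IH z lt_k /andP[lz zv] hzr.
have [|y /andP[zy yr] /andP[hzy hyr]] := hat_bar hP _ hzr; first lia.
case: (ltngtP y v) => [yv|vy|yv].
- have [z' /andP[yz' z'v] hz'] := IH y ltac:(lia) ltac:(lia) hyr.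
  by exists z' => //; rewrite z'v andbT; lia.
- have hzw : h z w.
    case: (ltngtP y w) => [yw|wy|<- //]; first exact: (hat_X hP zv vy yw hzy hvw).
    by exfalso; move: hzy; apply/negP; apply: xi_no_adj_across; lia.
  by move: (max_l z lz zv); rewrite hzw.
- by exists z; rewrite ?leqnn ?zv ?hzr -?yv ?hzy.
Qed.

Lemma xi_simplex_through_vwr : ~ (r = N /\ w = v.+1) ->
  (exists2 m, v < m < w & xi_simplex h N v m w r) \/
  (exists2 r', r < r' & xi_simplex h N v w r r').
Proof.
move=> not_face; have [v0 lv vw wr wN rN hvw hlw hrv max_l min_r] := S.
have hvr : h v r by rewrite (hat_sym hP).
have [[m /andP[vm mw] [/andP[hmw hmr] min_m]]|none] :=
  least_in_interval (fun x => h x w && h x r) v w.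
  left; exists m; first by rewrite vm.
  constructor=> //; try lia.
  - by rewrite (hat_sym hP).
  - move=> i vi im; apply/negP=> hiw.
    by have := min_m i; rewrite hiw (hat_X hP im mw wr hiw hmr); lia.
  - move=> i wi ir; apply/negP; rewrite (hat_sym hP) => hmi.
    by move: (min_r i wi ir); rewrite (hat_sym hP) (hat_X hP vm mw wi hvw hmi).
right.
have {}rN : r < N.
  rewrite ltn_neqAle rN andbT; apply/eqP=> r_eq_N.
  by have := none w.-1; rewrite r_eq_N hat_pred_adj //; lia.
have vvw : v <= v < w by rewrite leqnn vw.
have [_ _ /and3P[_ _ hwr]] := xi_climb_to_w vvw hvr.
have: exists i, (r < i <= N) && h i w.
  by exists N; rewrite rN leqnn (hat_sym hP) (hat_adjN hP).
case/ex_minnP=> r' /andP[/andP[rr' r'N] hr'w] min_r'.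
exists r' => //; constructor=> //; try lia.
- move=> i vi iw; apply/negP=> hir.
  have [|z' /andP[iz' z'w] /and3P[hz'r hz'w _]] := xi_climb_to_w (z := i) _ hir.
    by rewrite ltnW.
  by have := none z'; rewrite hz'w hz'r; lia.
- by move=> i ri ir'; apply/negP=> hiw; have := min_r' i; rewrite hiw andbT; lia.
Qed.

Lemma xi_simplex_through_lvr : ~ (r = N /\ v = l.+1) ->
  (exists2 m, l < m < v & xi_simplex h N l m v r) \/
  (exists2 r', r < r' & xi_simplex h N l v r r').
Proof.
move=> not_face; have [v0 lv vw wr wN rN hvw hlw hrv max_l min_r] := S.
have hvr : h v r by rewrite (hat_sym hP).
have [[m /andP[lm mv] [/andP[hmv hmr] min_m]]|none] :=
  least_in_interval (fun x => h x v && h x r) l v.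
  left; exists m; first by rewrite lm.
  constructor=> //; try lia.
  - exact: xi_adj_lv.
  - by rewrite (hat_sym hP).
  - move=> i li im; apply/negP=> hiv.
    have hir := hat_X hP im mv (ltn_trans vw wr) hiv hmr.
    by have := min_m i; rewrite hiv hir; lia.
  - move=> i vi ir; apply/negP; rewrite (hat_sym hP) => hmi.
    have not_hmw := max_l m lm mv; case: (ltngtP i w) => [iw|wi|iw].
    + by move: not_hmw; rewrite (hat_X hP mv vi iw hmi hvw).
    + by move: hmi; apply/negP; apply: xi_no_adj_across; lia.
    + by move: not_hmw; rewrite -iw hmi.
right.
have {}rN : r < N.
  rewrite ltn_neqAle rN andbT; apply/eqP=> r_eq_N.
  by have := none v.-1; rewrite r_eq_N hat_pred_adj //; lia.
have hlr := hat_X hP lv vw wr hlw hvr.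
have: exists i, (r < i <= N) && h i v.
  by exists N; rewrite rN leqnn (hat_sym hP) (hat_adjN hP) //; lia.
case/ex_minnP=> r' /andP[/andP[rr' r'N] hr'v] min_r'.
exists r' => //; constructor=> //; try lia.
- move=> i li iv; apply/negP=> hir.
  have [|z' /andP[iz' z'v] /andP[hz'r hz'v]] := xi_climb_to_v (z := i) _ hir.
    by rewrite li.
  by have := none z'; rewrite hz'v hz'r; lia.
- by move=> i ri ir'; apply/negP=> hiv; have := min_r' i; rewrite hiv andbT; lia.
Qed.

End XiSimplexTheory.

(* The bounds discard the junk values of truncated subtraction. *)
Definition hat_reflect (h : rel nat) (N : nat) : rel nat :=
  fun i j => [&& i <= N, j <= N & h (N - i) (N - j)].

Lemma hat_reflectE h N i j :
  i <= N -> j <= N -> hat_reflect h N i j = h (N - i) (N - j).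
Proof. by rewrite /hat_reflect => -> ->. Qed.

Lemma hat_reflectK h N i j :
  i <= N -> j <= N -> h i j = hat_reflect h N (N - i) (N - j).
Proof. by move=> iN jN; rewrite hat_reflectE ?leq_subr // !subKn. Qed.

Lemma persistent_hat_reflect h N :
  persistent_hat h N -> persistent_hat (hat_reflect h N) N.
Proof.
move=> hP; have hsym := hat_sym hP; constructor.
- by move=> i j; rewrite /hat_reflect hsym; case: (i <= N); case: (j <= N).
- move=> a b c d ab bc cd /and3P[aN cN hac] /and3P[bN dN hbd].
  rewrite /hat_reflect aN dN hsym /=; rewrite hsym in hac; rewrite hsym in hbd.
  by apply: (hat_X hP _ _ _ hbd hac); lia.
- move=> a b ab /and3P[aN bN hab]; rewrite hsym in hab.
  have [|x /andP[bx xa] /andP[hbx hxa]] := hat_bar hP _ hab; first lia.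
  exists (N - x); first lia.
  rewrite /hat_reflect aN bN leq_subr subKn; last lia.
  by rewrite (hsym _ x) hxa (hsym x) hbx.
- move=> i iN; rewrite /hat_reflect ltnW // iN hsym.
  have -> : N - i = (N - i.+1).+1 by lia.
  by rewrite (hat_path hP) //; lia.
- by move=> j j0 jN; rewrite /hat_reflect subn0 leq0n jN hsym (hat_adjN hP) //; lia.
- by move=> i iN; rewrite /hat_reflect subnn leqnn ltnW // hsym (hat_adj0 hP) //; lia.
Qed.

Lemma xi_simplex_reflect h h' N l v w r l' v' w' r' :
  symmetric h -> (forall i j, i <= N -> j <= N -> h' i j = h (N - i) (N - j)) ->
  (l' + r = N)%N -> (v' + w = N)%N -> (w' + v = N)%N -> (r' + l = N)%N ->
  xi_simplex h N l v w r -> xi_simplex h' N l' v' w' r'.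
Proof.
move=> hsym h'E l'r v'w w'v r'l [v0 lv vw wr wN rN hvw hlw hrv max_l min_r].
have {}h'E i j i' j' : (i + i' = N)%N -> (j + j' = N)%N -> h' i j = h i' j'.
  by move=> ii' jj'; rewrite h'E; [congr h | ..]; lia.
constructor; try lia.
- by rewrite (h'E _ _ w v) ?(hsym w) //; lia.
- by rewrite (h'E _ _ r v) //; lia.
- by rewrite (h'E _ _ l w) //; lia.
- by move=> i l'i iv'; rewrite (h'E _ _ (N - i) v); [apply: min_r | ..]; lia.
- by move=> i w'i ir'; rewrite (h'E _ _ (N - i) w); [apply: max_l | ..]; lia.
Qed.

Lemma xi_simplex_hat_reflect h N l v w r : persistent_hat h N ->
  xi_simplex h N l v w r ->
  xi_simplex (hat_reflect h N) N (N - r) (N - w) (N - v) (N - l).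
Proof.
move=> hP S; have [_ lv vw wr _ rN _ _ _ _ _] := S.
by apply: xi_simplex_reflect (hat_sym hP) (@hat_reflectE h N) _ _ _ _ S; lia.
Qed.

Lemma xi_simplex_hat_unreflect h N l v w r l' v' w' r' : persistent_hat h N ->
  (l' + r = N)%N -> (v' + w = N)%N -> (w' + v = N)%N -> (r' + l = N)%N ->
  xi_simplex (hat_reflect h N) N l v w r -> xi_simplex h N l' v' w' r'.
Proof.
move=> hP; apply: xi_simplex_reflect (@hat_reflectK h N).
exact: hat_sym (persistent_hat_reflect hP).
Qed.

Section ReflectedCases.

Variables (h : rel nat) (N l v w r : nat).
Hypotheses (hP : persistent_hat h N) (S : xi_simplex h N l v w r).

Lemma xi_simplex_through_lvw : ~ (l = 0 /\ w = v.+1) ->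
  (exists2 m, v < m < w & xi_simplex h N l v m w) \/
  (exists2 l', l' < l & xi_simplex h N l' l v w).
Proof.
move=> not_face; have [_ lv vw wr _ rN _ _ _ _ _] := S.
have not_face' : ~ (N - l = N /\ N - v = (N - w).+1) by lia.
have [[m mvw Sm]|[l' ll' Sl']] := xi_simplex_through_vwr (persistent_hat_reflect hP)
  (xi_simplex_hat_reflect hP S) not_face'.
  have [_ _ _ _ _ mN _ _ _ _ _] := Sm.
  by left; exists (N - m); [lia | apply: xi_simplex_hat_unreflect hP _ _ _ _ Sm; lia].
have [_ _ _ _ _ l'N _ _ _ _ _] := Sl'.
by right; exists (N - l'); [lia | apply: xi_simplex_hat_unreflect hP _ _ _ _ Sl'; lia].
Qed.

Lemma xi_simplex_through_lwr : ~ (l = 0 /\ r = w.+1) ->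
  (exists2 m, w < m < r & xi_simplex h N l w m r) \/
  (exists2 l', l' < l & xi_simplex h N l' l w r).
Proof.
move=> not_face; have [_ lv vw wr _ rN _ _ _ _ _] := S.
have not_face' : ~ (N - l = N /\ N - w = (N - r).+1) by lia.
have [[m mvw Sm]|[l' ll' Sl']] := xi_simplex_through_lvr (persistent_hat_reflect hP)
  (xi_simplex_hat_reflect hP S) not_face'.
  have [_ _ _ _ _ mN _ _ _ _ _] := Sm.
  by left; exists (N - m); [lia | apply: xi_simplex_hat_unreflect hP _ _ _ _ Sm; lia].
have [_ _ _ _ _ l'N _ _ _ _ _] := Sl'.
by right; exists (N - l'); [lia | apply: xi_simplex_hat_unreflect hP _ _ _ _ Sl'; lia].
Qed.

End ReflectedCases.

Lemma xi_simplex_share_triple h N l v w r a b c :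
  persistent_hat h N -> xi_simplex h N l v w r -> a < b -> b < c ->
  a \in [fset l; v; w; r] -> b \in [fset l; v; w; r] -> c \in [fset l; v; w; r] ->
  ~ (a = 0 /\ c = b.+1) -> ~ (c = N /\ b = a.+1) ->
  exists l' v' w' r', xi_simplex h N l' v' w' r' /\
    ([fset a; b; c] `<=` [fset l'; v'; w'; r']) &&
    ([fset l'; v'; w'; r'] != [fset l; v; w; r]).
Proof.
move=> hP S ab bc aS bS cS not_face0 not_faceN.
have [_ lv vw wr _ _ _ _ _ _ _] := S.
have S4 x : x \in [fset l; v; w; r] -> [|| x == l, x == v, x == w | x == r].
  by rewrite !inE -!orbA.
case/or4P: (S4 a aS) => /eqP ea; case/or4P: (S4 b bS) => /eqP eb;
  case/or4P: (S4 c cS) => /eqP ec; subst a b c; try lia.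
- have [[m ? Sm]|[l' ? Sl']] := xi_simplex_through_lvw hP S not_face0.
    by exists l, v, m, w; split=> //; apply: (fset3_sub_neq (x := m)); rewrite !inE; lia.
  by exists l', l, v, w; split=> //; apply: (fset3_sub_neq (x := l')); rewrite !inE; lia.
- have [[m ? Sm]|[r' ? Sr']] := xi_simplex_through_lvr hP S not_faceN.
    by exists l, m, v, r; split=> //; apply: (fset3_sub_neq (x := m)); rewrite !inE; lia.
  by exists l, v, r, r'; split=> //; apply: (fset3_sub_neq (x := r')); rewrite !inE; lia.
- have [[m ? Sm]|[l' ? Sl']] := xi_simplex_through_lwr hP S not_face0.
    by exists l, w, m, r; split=> //; apply: (fset3_sub_neq (x := m)); rewrite !inE; lia.
  by exists l', l, w, r; split=> //; apply: (fset3_sub_neq (x := l')); rewrite !inE; lia.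
- have [[m ? Sm]|[r' ? Sr']] := xi_simplex_through_vwr hP S not_faceN.
    by exists v, m, w, r; split=> //; apply: (fset3_sub_neq (x := m)); rewrite !inE; lia.
  by exists v, w, r, r'; split=> //; apply: (fset3_sub_neq (x := r')); rewrite !inE; lia.
Qed.

Section HatGraph.

Variables (n : nat) (E : rel nat).
Hypotheses (GE : graph_on n E) (PE : persistent n E).

Lemma adj_range x y : adj E x y -> [&& 0 < x, x <= n, 0 < y, y <= n & x != y].
Proof. by case/orP=> /GE[? ? ?]; lia. Qed.

Lemma adj_hadj x y : adj E x y -> hadj n E x y.
Proof. by rewrite /hadj => ->. Qed.

Lemma hadj_adj x y : hadj n E x y -> 0 < x -> x < y -> y <= n -> adj E x y.
Proof. by case/orP=> [//|]; lia. Qed.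

Lemma hadj_border x y : x < y <= n.+1 -> (x == 0) || (y == n.+1) -> hadj n E x y.
Proof. by rewrite /hadj => ? ?; apply/orP; right; lia. Qed.

Lemma hadj_bound x y : hadj n E x y -> (x <= n.+1) && (y <= n.+1).
Proof. by case/orP=> [/adj_range|]; lia. Qed.

Lemma hadj_path i : i < n.+1 -> hadj n E i i.+1.
Proof.
move=> i_lt; have [path _ _] := PE.
have [i0|i_gt0] := posnP i; first by apply: hadj_border; lia.
have [i_ltn|i_gen] := ltnP i n; last by apply: hadj_border; lia.
exact/adj_hadj/path.
Qed.

Lemma persistent_hat_hadj : persistent_hat (hadj n E) n.+1.
Proof.
have [_ X bar] := PE; constructor=> //.
- by move=> i j; rewrite /hadj /adj; case: (E i j); case: (E j i) => //=; lia.
- move=> a b c d ab bc cd hac hbd; have /andP[_ dN] := hadj_bound hbd.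
  have [a0|a_gt0] := posnP a; first by apply: hadj_border; lia.
  have [d_len|d_gtn] := leqP d n; last by apply: hadj_border; lia.
  have adj_ac : adj E a c by apply: (hadj_adj hac); lia.
  have adj_bd : adj E b d by apply: (hadj_adj hbd); lia.
  exact/adj_hadj/(X a b c d).
- move=> a b ab hab; have /andP[_ bN] := hadj_bound hab.
  have [->|a_gt0] := posnP a.
    exists b.-1; first lia.
    rewrite hadj_border //=; last lia.
    by rewrite -{2}(prednK (ltn_trans (ltn0Sn a) ab)); apply: hadj_path; lia.
  have [b_len|b_gtn] := leqP b n; last first.
    by exists a.+1; [lia | rewrite hadj_path ?hadj_border //; lia].
  have adj_ab : adj E a b by apply: (hadj_adj hab); lia.
  have [x axb /andP[ax xb]] := bar a b (ltnW ab) adj_ab ltac:(lia).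
  by exists x; rewrite // !adj_hadj.
- exact: hadj_path.
- by move=> j j0 jN; apply: hadj_border; lia.
- by move=> i iN; apply: hadj_border; lia.
Qed.

Lemma xi_simplex_of_edge v w : v < w -> adj E v w ->
  exists l r, xi_simplex (hadj n E) n.+1 l v w r.
Proof.
move=> vw e_vw; have /and5P[v0 _ _ wn _] := adj_range e_vw.
have hsym := hat_sym persistent_hat_hadj.
have ex_l : exists i, (i < v) && hadj n E i w.
  by exists 0; rewrite v0 hadj_border //; lia.
have [|l /andP[lv hlw] max_l] := ex_maxnP ex_l (m := v); first by move=> i /andP[/ltnW].
have: exists i, (w < i <= n.+1) && hadj n E i v.
  by exists n.+1; rewrite hsym hadj_border ?eqxx ?orbT //; lia.
case/ex_minnP=> r /andP[/andP[wr rN] hrv] min_r.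
exists l, r; constructor=> //; try lia.
- exact: adj_hadj.
- by move=> i li iv; apply/negP=> hiw; have := max_l i; rewrite iv hiw; lia.
- by move=> i wi ir; apply/negP=> hiv; have := min_r i; rewrite hiv andbT; lia.
Qed.

Lemma xiG_xi_simplex l v w r :
  xi_simplex (hadj n E) n.+1 l v w r -> xiG n E v w = [fset l; v; w; r].
Proof.
move=> [_ lv vw wr _ rN _ hlw hrv max_l min_r].
rewrite /xiG /ellG /rG (bigmax_id_eq (m := l)) ?(bigminn_id_eq (m := r));
  rewrite ?mem_index_iota //; try lia.
- move=> i; rewrite mem_index_iota => /andP[wi _] hiv; rewrite leqNgt.
  by apply: contraL hiv => ir; apply: min_r.
- move=> i; rewrite mem_index_iota => /andP[_ iv] hiw; rewrite leqNgt.
  by apply: contraL hiw => li; apply: max_l.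
Qed.

Lemma inXi_xi_simplex l v w r :
  xi_simplex (hadj n E) n.+1 l v w r -> inXi n E [fset l; v; w; r].
Proof.
move=> S; have [v0 _ vw _ wN _ hvw _ _ _ _] := S.
exists v, w; split=> //; last by rewrite (xiG_xi_simplex S).
by apply: (hadj_adj hvw); lia.
Qed.

End HatGraph.

Unset Implicit Arguments.

Theorem lemma11 (n : nat) (E : rel nat) (S : {fset nat}) (a b c : nat) :
  graph_on n E -> persistent n E ->
  inXi n E S -> #|` S| = 4 ->
  a < b -> b < c -> a \in S -> b \in S -> c \in S ->
  ~ inF2 n [fset a; b; c] ->
  exists S' : {fset nat},
    [/\ inXi n E S', #|` S'| = 4, S' <> S & [fset a; b; c] `<=` S'].
Proof.
move=> GE PE [v [w [vw e_vw ->]]] _ ab bc aS bS cS not_face.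
have [l [r Sxi]] := xi_simplex_of_edge GE PE vw e_vw.
have [_ lv _ wr _ rN _ _ _ _ _] := Sxi.
rewrite (xiG_xi_simplex Sxi) in aS bS cS *.
have cN : c <= n.+1 by move: cS; rewrite !inE; lia.
have not_face0 : ~ (a = 0 /\ c = b.+1).
  by case=> a0 cb; apply: not_face; exists b; split; [lia | lia | left; rewrite a0 cb].
have not_faceN : ~ (c = n.+1 /\ b = a.+1).
  by case=> cn ba; apply: not_face; exists b; split; [lia | lia | right; rewrite cn ba].
have [l' [v' [w' [r' [S' /andP[sub new]]]]]] := xi_simplex_share_triple
  (persistent_hat_hadj GE PE) Sxi ab bc aS bS cS not_face0 not_faceN.
have [_ l'v' v'w' w'r' _ _ _ _ _ _ _] := S'.
exists [fset l'; v'; w'; r']; split=> //; last exact/eqP.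
- exact: inXi_xi_simplex S'.
- exact: card_fset4.
Qed.
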